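(* Let $0<k<n$ and $d$ be integers, and let $A_c=(\alpha_c,n_1,d_1,k_1,n_2,d_2,k_2)$ be an allowable critical data set for type $(n,d,k)$ with $k_2=0$. Then $C_{12}>0$ and $C_{21}>0$.
   Context: Write $d=na-t$ with integers $a,t$, $0\le t<n$, and $ka=l(n-k)+t+m$ with integers $l,m$, $0\le m<n-k$. A critical data set for type $(n,d,k)$ is a tuple $A_c=(\alpha_c,n_1,d_1,k_1,n_2,d_2,k_2)$ with integers $n_i\ge1$, $k_i\ge0$, $d_i$ such that $n_1+n_2=n$, $d_1+d_2=d$, $k_1+k_2=k$, $\frac{d_2}{n_2}>\frac{d_1}{n_1}$, $\frac{k_1}{n_1}>\frac{k_2}{n_2}$, and $\alpha_c=\frac{d_2n_1-d_1n_2}{n_2k_1-n_1k_2}$. It is allowable if moreover $\frac tk<\alpha_c<\frac{ln+t}{k}$, $d\ge\frac1k(n^2-1)-(n-k)$, $d_1\ge\frac1{k_1}(n_1^2-1)-(n_1-k_1)$, and either ($k_2=0$ and $n_2=1$) or ($k_2\ge1$ and $d_2\ge\frac1{k_2}(n_2^2-1)-(n_2-k_2)$). Define $C_{12}=-n_1n_2-d_2n_1+d_1n_2+k_1(d_2+n_2-k_2)$ and $C_{21}=-n_1n_2+d_2n_1-d_1n_2+k_2(d_1+n_1-k_1)$. *)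

From mathcomp Require Import all_boot all_order all_algebra.
Set Implicit Arguments. Unset Strict Implicit. Unset Printing Implicit Defensive.
Import Order.TTheory GRing.Theory Num.Theory.
Local Open Scope ring_scope.

Definition toQ (z : int) : rat := z%:~R.

Definition ad_decomp (n d a t : int) : Prop :=
  d = n * a - t /\ 0 <= t /\ t < n.

Definition lm_decomp (n k a t l m : int) : Prop :=
  k * a = l * (n - k) + t + m /\ 0 <= m /\ m < n - k.

Definition critical_data_set (n d k : int) (alpha : rat)
    (n1 d1 k1 n2 d2 k2 : int) : Prop :=
  [/\ 1 <= n1, 1 <= n2, 0 <= k1 & 0 <= k2] /\
  [/\ n1 + n2 = n, d1 + d2 = d & k1 + k2 = k] /\
  [/\ toQ d2 / toQ n2 > toQ d1 / toQ n1,
       toQ k1 / toQ n1 > toQ k2 / toQ n2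
     & alpha = toQ (d2 * n1 - d1 * n2) / toQ (n2 * k1 - n1 * k2)].

Definition deg_bound (n d k : int) : Prop :=
  toQ d >= (toQ (n ^+ 2 - 1)) / toQ k - toQ (n - k).

(* allowable critical data set; t, l are the integers attached to (n,d,k) *)
Definition allowable (n d k t l : int) (alpha : rat)
    (n1 d1 k1 n2 d2 k2 : int) : Prop :=
  critical_data_set n d k alpha n1 d1 k1 n2 d2 k2 /\
  [/\ toQ t / toQ k < alpha,
      alpha < toQ (l * n + t) / toQ k,
      deg_bound n d k,
      deg_bound n1 d1 k1
    & (k2 = 0 /\ n2 = 1) \/ (1 <= k2 /\ deg_bound n2 d2 k2)].

Definition C12 (n1 d1 k1 n2 d2 k2 : int) : int :=
  - (n1 * n2) - d2 * n1 + d1 * n2 + k1 * (d2 + n2 - k2).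

Definition C21 (n1 d1 k1 n2 d2 k2 : int) : int :=
  - (n1 * n2) + d2 * n1 - d1 * n2 + k2 * (d1 + n1 - k1).

(* With k2 = 0 the allowability conditions force n2 = 1 and k1 = k, so alpha is
   (d2 n1 - d1) / k.  Writing e = d2 - a, the numerator equals n e + t, and the
   window t/k < alpha < (l n + t)/k says exactly 0 < e < l.  Substituting
   d = n a - t and k a = l (n - k) + t + m gives
   C12 = 1 + m + (l - e - 1)(n - k) and C21 = n (e - 1) + t + 1,
   both visibly positive. *)

From mathcomp Require Import all_boot all_order all_algebra.
From mathcomp Require Import zify ring.
Import Order.TTheory GRing.Theory Num.Theory.
Local Open Scope ring_scope.

Lemma ltr_toQ_div2r (k x y : int) :
  0 < k -> (toQ x / toQ k < toQ y / toQ k) = (x < y).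
Proof.
move=> k_gt0; rewrite ltr_pM2r ?invr_gt0 /toQ ?ltr0z //.
by rewrite ltr_int.
Qed.

Lemma allowable_k2_eq0 {n d k t l : int} {alpha : rat} {n1 d1 k1 n2 d2 : int} :
  allowable n d k t l alpha n1 d1 k1 n2 d2 0 ->
  [/\ n2 = 1, n1 = n - 1, k1 = k, d1 = d - d2
    & alpha = toQ (d2 * n1 - d1) / toQ k].
Proof.
move=> [[_ [[en ed ek] [_ _ ->]]] [_ _ _ _ [[_ n2_1] | [//]]]].
have k1_k : k1 = k by rewrite -ek addr0.
subst n2 k1; split; [done | lia | done | lia | by rewrite mulr1 mul1r mulr0 subr0].
Qed.

Lemma alpha_window_excess {n k t l e : int} {alpha : rat} :
  0 < k -> 0 < n -> alpha = toQ (n * e + t) / toQ k ->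
  toQ t / toQ k < alpha -> alpha < toQ (l * n + t) / toQ k ->
  0 < e < l.
Proof.
move=> k_gt0 n_gt0 ->; rewrite !ltr_toQ_div2r // -{1}[t]add0r !ltrD2r.
by rewrite [l * n]mulrC pmulr_rgt0 // ltr_pM2l // => -> ->.
Qed.

Lemma slope_numerator_eq {n d a t : int} (d2 : int) :
  d = n * a - t -> d2 * (n - 1) - (d - d2) = n * (d2 - a) + t.
Proof. by move->; ring. Qed.

Lemma C12_k2_eq0 {n d k a t l m : int} (d2 : int) :
  d = n * a - t -> k * a = l * (n - k) + t + m ->
  C12 (n - 1) (d - d2) k 1 d2 0 = 1 + m + (l - (d2 - a) - 1) * (n - k).
Proof.
move=> -> ka_eq; rewrite /C12.
have -> : m = k * a - l * (n - k) - t by rewrite ka_eq; ring.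
ring.
Qed.

Lemma C21_k2_eq0 {n d a t : int} (k d2 : int) :
  d = n * a - t ->
  C21 (n - 1) (d - d2) k 1 d2 0 = n * (d2 - a - 1) + t + 1.
Proof. by move->; rewrite /C21; ring. Qed.

Lemma C12_k2_eq0_gt0 {n d k a t l m d2 : int} :
  d = n * a - t -> k * a = l * (n - k) + t + m ->
  k < n -> 0 <= m -> d2 - a < l -> 0 < C12 (n - 1) (d - d2) k 1 d2 0.
Proof.
move=> d_eq ka_eq lt_kn m_ge0 lt_el; rewrite (C12_k2_eq0 d2 d_eq ka_eq).
have : 0 <= (l - (d2 - a) - 1) * (n - k) by apply: mulr_ge0; lia.
lia.
Qed.

Lemma C21_k2_eq0_gt0 {n d k a t d2 : int} :
  d = n * a - t ->
  0 < n -> 0 <= t -> 0 < d2 - a -> 0 < C21 (n - 1) (d - d2) k 1 d2 0.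
Proof.
move=> d_eq n_gt0 t_ge0 e_gt0; rewrite (C21_k2_eq0 k d2 d_eq).
have : 0 <= n * (d2 - a - 1) by apply: mulr_ge0; lia.
lia.
Qed.

Theorem proposition5p1 (n d k a t l m : int) (alpha : rat)
    (n1 d1 k1 n2 d2 k2 : int) :
  0 < k -> k < n ->
  ad_decomp n d a t ->
  lm_decomp n k a t l m ->
  allowable n d k t l alpha n1 d1 k1 n2 d2 k2 ->
  k2 = 0 ->
  0 < C12 n1 d1 k1 n2 d2 k2 /\ 0 < C21 n1 d1 k1 n2 d2 k2.
Proof.
move=> k_gt0 lt_kn [d_eq [t_ge0 _]] [ka_eq [m_ge0 _]] hA k2_0; subst k2.
have [_ [alpha_gt alpha_lt _ _ _]] := hA.
have [-> -> -> -> alpha_eq] := allowable_k2_eq0 hA.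
have n_gt0 : 0 < n by lia.
rewrite (slope_numerator_eq d2 d_eq) in alpha_eq.
have /andP[e_gt0 e_lt_l] :=
  alpha_window_excess k_gt0 n_gt0 alpha_eq alpha_gt alpha_lt.
split; [exact: C12_k2_eq0_gt0 d_eq ka_eq lt_kn m_ge0 e_lt_l
       | exact: C21_k2_eq0_gt0 d_eq n_gt0 t_ge0 e_gt0].
Qed.
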